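(* Let $\rho^{AB}$ be a density matrix on $\mathcal{H}_A\otimes\mathcal{H}_B$ with $\dim\mathcal{H}_A=n$ and let $o>0$. Suppose the gambler chooses measurement operators $\{F_j^B\}_{j=1}^m$ on $B$ ($\sum_j(F_j^B)^\dagger F_j^B=\mathbb{1}$, $m$ arbitrary), learns the outcome $j$ (probability $\beta_j=\mathrm{Tr}\,\rho^{AB}(\mathbb{1}\otimes(F_j^B)^\dagger F_j^B)$), after which $A$ is in state $\rho_j^A=\frac1{\beta_j}\mathrm{Tr}_B\,\rho^{AB}(\mathbb{1}\otimes(F_j^B)^\dagger F_j^B)$; she then chooses an orthonormal projective measurement $\{E_{ij}^A\}_{i=1}^n$ on $A$ and a betting vector depending on $j$, with uniform odds $o$-for-1 and all wealth bet. Let $W_{A|B}^{**}$ be the optimal (supremal) doubling rate of this protocol and $W_A^{**}=\log_2 o-S(A)_\rho$ the optimal doubling rate without help. Then $$W_{A|B}^{**}-W_A^{**}=\sup_{\{F_j^B\}}\Big[S(\rho^A)-\sum_{j}\beta_j S(\rho_j^A)\Big],$$ i.e. $W_{A|B}^{**}=\log_2 o-\inf_{\{F_j^B\}}\sum_j\beta_jS(\rho_j^A)$.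
   Context: The doubling rate of the protocol is $\sum_j\beta_j\sum_i \alpha_{i|j}\log_2(q_{i|j}o)$ where $\alpha_{i|j}=\mathrm{Tr}\,\rho_j^AE_{ij}^A$ and $q_{i|j}$ is the fraction of wealth bet on outcome $i$ given $j$ ($q_{i|j}\ge0$, $\sum_iq_{i|j}=1$). $S(\rho)=-\mathrm{Tr}\rho\log_2\rho$ is the von Neumann entropy; $\rho^A=\mathrm{Tr}_B\rho^{AB}$. *)

From Stdlib Require Import Reals Lra Lia Arith ClassicalEpsilon.
Open Scope R_scope.

Record C := mkC { Cre : R; Cim : R }.
Definition C0 : C := mkC 0 0.
Definition C1 : C := mkC 1 0.
Definition RtoC (r : R) : C := mkC r 0.
Definition Cadd (x y : C) : C := mkC (Cre x + Cre y) (Cim x + Cim y).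
Definition Cmul (x y : C) : C :=
  mkC (Cre x * Cre y - Cim x * Cim y) (Cre x * Cim y + Cim x * Cre y).
Definition Cconj (x : C) : C := mkC (Cre x) (- Cim x).

Fixpoint csum (n : nat) (f : nat -> C) : C :=
  match n with O => C0 | S k => Cadd (csum k f) (f k) end.
Fixpoint rsum (n : nat) (f : nat -> R) : R :=
  match n with O => 0 | S k => rsum k f + f k end.

(** * Matrices: entries A i j, only indices < dimension are meaningful *)
Definition Mat := nat -> nat -> C.
Definition meq (n : nat) (A B : Mat) : Prop :=
  forall i j, (i < n)%nat -> (j < n)%nat -> A i j = B i j.
Definition mmul (n : nat) (A B : Mat) : Mat :=
  fun i j => csum n (fun k => Cmul (A i k) (B k j)).
Definition adj (A : Mat) : Mat := fun i j => Cconj (A j i).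
Definition idm : Mat := fun i j => if Nat.eqb i j then C1 else C0.
Definition mscale (r : R) (A : Mat) : Mat := fun i j => Cmul (RtoC r) (A i j).
Definition msum (m : nat) (M : nat -> Mat) : Mat := fun i k => csum m (fun j => M j i k).
Definition trace (n : nat) (A : Mat) : C := csum n (fun i => A i i).
Definition diag (l : nat -> R) : Mat := fun i j => if Nat.eqb i j then RtoC (l i) else C0.

(** Tensor product H_A (x) H_B with dim H_B = d: index (a,b) <-> a*d+b *)
Definition kron (d : nat) (A B : Mat) : Mat :=
  fun i j => Cmul (A (i / d)%nat (j / d)%nat) (B (i mod d)%nat (j mod d)%nat).
Definition ptraceB (d : nat) (X : Mat) : Mat :=
  fun a a' => csum d (fun b => X (a * d + b)%nat (a' * d + b)%nat).

Definition hermitian (n : nat) (A : Mat) : Prop := meq n (adj A) A.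
Definition psd (n : nat) (A : Mat) : Prop :=
  hermitian n A /\
  forall v : nat -> C,
    0 <= Cre (csum n (fun i => Cmul (Cconj (v i)) (csum n (fun j => Cmul (A i j) (v j))))).
Definition density (n : nat) (A : Mat) : Prop := psd n A /\ trace n A = C1.
Definition unitary (n : nat) (U : Mat) : Prop := meq n (mmul n (adj U) U) idm.

Definition log2 (x : R) : R := ln x / ln 2.
(** eta x = - x log2 x, with the convention 0 log 0 = 0 *)
Definition eta (x : R) : R := if Rle_dec x 0 then 0 else - (x * log2 x).

Definition is_vn_entropy (n : nat) (rho : Mat) (s : R) : Prop :=
  exists (U : Mat) (l : nat -> R),
    unitary n U /\ meq n rho (mmul n U (mmul n (diag l) (adj U))) /\
    s = rsum n (fun k => eta (l k)).
Definition vN_entropy (n : nat) (rho : Mat) : R :=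
  epsilon (inhabits 0) (is_vn_entropy n rho).

Definition meas_ops (d m : nat) (F : nat -> Mat) : Prop :=
  meq d (msum m (fun j => mmul d (adj (F j)) (F j))) idm.

Definition rhoA (d : nat) (rho : Mat) : Mat := ptraceB d rho.

Definition post (n d : nat) (rho : Mat) (F : nat -> Mat) (j : nat) : Mat :=
  mmul (n * d)%nat rho (kron d idm (mmul d (adj (F j)) (F j))).
Definition beta (n d : nat) (rho : Mat) (F : nat -> Mat) (j : nat) : R :=
  Cre (trace (n * d)%nat (post n d rho F j)).
Definition rhoA_j (n d : nat) (rho : Mat) (F : nat -> Mat) (j : nat) : Mat :=
  mscale (/ beta n d rho F j) (ptraceB d (post n d rho F j)).

(** orthonormal basis e i (vector with components e i k), i < n *)
Definition onb (n : nat) (e : nat -> nat -> C) : Prop :=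
  forall i i', (i < n)%nat -> (i' < n)%nat ->
    csum n (fun k => Cmul (Cconj (e i k)) (e i' k)) = (if Nat.eqb i i' then C1 else C0).
Definition proj (e : nat -> nat -> C) (i : nat) : Mat :=
  fun k l => Cmul (e i k) (Cconj (e i l)).

(** alpha_{i|j} = Tr rho_j^A E_{ij}^A ; e j is the basis chosen after outcome j *)
Definition alpha (n d : nat) (rho : Mat) (F : nat -> Mat) (e : nat -> nat -> nat -> C)
  (i j : nat) : R :=
  Cre (trace n (mmul n (rhoA_j n d rho F j) (proj (e j) i))).

(** doubling rate sum_j beta_j sum_i alpha_{i|j} log2 (q_{i|j} o) ; q i j = q_{i|j} *)
Definition doubling_rate (n d : nat) (rho : Mat) (o : R) (m : nat) (F : nat -> Mat)
  (e : nat -> nat -> nat -> C) (q : nat -> nat -> R) : R :=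
  rsum m (fun j => beta n d rho F j *
    rsum n (fun i => alpha n d rho F e i j * log2 (q i j * o))).

Definition betting (n m : nat) (q : nat -> nat -> R) : Prop :=
  (forall i j, (i < n)%nat -> (j < m)%nat -> 0 <= q i j) /\
  (forall j, (j < m)%nat -> rsum n (fun i => q i j) = 1).

(** strategies with finite doubling rate (no zero bet on an outcome of positive probability);
    the others have doubling rate -infinity and do not affect the supremum *)
Definition finite_rate (n d : nat) (rho : Mat) (m : nat) (F : nat -> Mat)
  (e : nat -> nat -> nat -> C) (q : nat -> nat -> R) : Prop :=
  forall i j, (i < n)%nat -> (j < m)%nat ->
    0 < beta n d rho F j * alpha n d rho F e i j -> 0 < q i j.

Definition RateSet (n d : nat) (rho : Mat) (o : R) (W : R) : Prop :=
  exists (m : nat) (F : nat -> Mat) (e : nat -> nat -> nat -> C) (q : nat -> nat -> R),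
    meas_ops d m F /\ (forall j, (j < m)%nat -> onb n (e j)) /\ betting n m q /\
    finite_rate n d rho m F e q /\ W = doubling_rate n d rho o m F e q.

Definition GainSet (n d : nat) (rho : Mat) (G : R) : Prop :=
  exists (m : nat) (F : nat -> Mat),
    meas_ops d m F /\
    G = vN_entropy n (rhoA d rho)
        - rsum m (fun j => beta n d rho F j * vN_entropy n (rhoA_j n d rho F j)).

Definition W_A_star (n d : nat) (rho : Mat) (o : R) : R :=
  log2 o - vN_entropy n (rhoA d rho).

(** Fix a measurement {F_j} on B.  For every outcome j the
    conditional state rho_j^A has a spectral decomposition with eigenvalues
    l_k (a probability vector when beta_j > 0).  For any orthonormal basis
    {e_i} the outcome probabilities are alpha_i = sum_k P_ik l_k with
    P_ik = |<e_i, u_k>|^2 doubly stochastic, so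
        sum_i alpha_i log q_i <= sum_i alpha_i log alpha_i      (Gibbs)
                              <= sum_k l_k log l_k = -S(rho_j^A)  (averaging),
    and both bounds are attained by the eigenbasis and q = l.  Averaging over
    j with weights beta_j (which sum to 1) shows that the achievable rates
    for F are bounded by, and attain, log2 o - sum_j beta_j S(rho_j^A).  The
    two sets of the theorem therefore have the same upper bounds up to the
    shift W_A^** = log2 o - S(rho^A), hence the same least upper bounds. *)
Set Warnings "-notation-overridden,-ambiguous-paths,-parsing,-deprecated,-notation-incompatible-prefix".
From Pilot Require Import Defs.
From Stdlib Require Import Reals Lra Lia ClassicalEpsilon.
From mathcomp Require Import all_boot all_order all_algebra.
From mathcomp Require Import Rstruct complex spectral sesquilinear.
Set Implicit Arguments. Unset Strict Implicit. Unset Printing Implicit Defensive.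

Section RealInequalities.
Local Open Scope R_scope.

Lemma ln_le_sub1 x : 0 < x -> ln x <= x - 1.
Proof. move=> hx; have := exp_ineq1_le (ln x); rewrite exp_ln //; lra. Qed.

Lemma ln2_pos : 0 < ln 2.
Proof. have := ln_lt_2; lra. Qed.

Lemma xln_ratio_le a q : 0 <= a -> 0 <= q -> (0 < a -> 0 < q) ->
  a * (ln q - ln a) <= q - a.
Proof.
move=> ha hq hqa; case: (Rle_lt_or_eq_dec 0 a ha) => [apos|<-]; last lra.
have qpos := hqa apos.
have := ln_le_sub1 (Rdiv_lt_0_compat q a qpos apos).
rewrite /Rdiv (ln_mult q (/ a) qpos (Rinv_0_lt_compat _ apos)) (ln_Rinv _ apos).
move=> h; have := Rmult_le_compat_l a _ _ ha h.
have e : a * (q * / a) = q by field; lra.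
rewrite Rmult_minus_distr_l e; lra.
Qed.

Lemma weighted_xln_ratio_le P l a : 0 <= P -> 0 <= l -> 0 <= a -> P * l <= a ->
  P * l - P * a <= P * l * (ln l - ln a).
Proof.
move=> hP hl ha hle.
case: (Rle_lt_or_eq_dec 0 (P * l) (Rmult_le_pos _ _ hP hl)) => [hpl|hpl]; last first.
  rewrite -hpl; have := Rmult_le_pos _ _ hP ha; lra.
have lpos : 0 < l by case: (Rle_lt_or_eq_dec 0 l hl) => // e; rewrite -e Rmult_0_r in hpl; lra.
have Ppos : 0 < P by case: (Rle_lt_or_eq_dec 0 P hP) => // e; rewrite -e Rmult_0_l in hpl; lra.
have := Rmult_le_compat_l P _ _ hP (xln_ratio_le hl ha (fun _ => Rlt_le_trans _ _ _ hpl hle)).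
lra.
Qed.

Lemma xlog2_mul a q o : 0 <= a -> 0 < o -> (0 < a -> 0 < q) ->
  a * log2 (q * o) = (a * ln q + a * ln o) / ln 2.
Proof.
move=> ha ho hqa; have := ln2_pos => hl2; rewrite /log2.
case: (Rle_lt_or_eq_dec 0 a ha) => [apos|<-]; last by field; lra.
by rewrite (ln_mult q o (hqa apos) ho); field; lra.
Qed.

Lemma eta_ln x : 0 <= x -> eta x = - (x * ln x) / ln 2.
Proof.
move=> hx; have := ln2_pos => hl2; rewrite /eta /log2.
case: (Rle_dec x 0) => h; last by field; lra.
have -> : x = 0 by lra.
by field; lra.
Qed.

(** Betting the probability itself: x log2 (x o) = x log2 o - eta x. *)
Lemma xlog2_self x o : 0 <= x -> 0 < o -> x * log2 (x * o) = x * log2 o - eta x.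
Proof.
move=> hx ho; rewrite /eta /log2; case: (Rle_dec x 0) => h.
  have -> : x = 0 by lra.
  lra.
rewrite (ln_mult x o ltac:(lra) ho); have := ln2_pos => hl2; field; lra.
Qed.

Lemma rsum_const n c : rsum n (fun _ => c) = INR n * c.
Proof.
elim: n => [|n IH]; first by rewrite /= Rmult_0_l.
by rewrite [rsum _ _]/= IH S_INR; ring.
Qed.

End RealInequalities.

From mathcomp Require Import ring.

Import Order.TTheory GRing.Theory Num.Theory.

Notation CC := (R[i]).

Section ComplexBridge.
Local Open Scope complex_scope.
Local Open Scope ring_scope.
Local Open Scope sesquilinear_scope.

Definition tc (z : Defs.C) : CC := Complex (Cre z) (Cim z).
Definition ofc (z : CC) : Defs.C := mkC (complex.Re z) (complex.Im z).

Lemma tcK : cancel tc ofc. Proof. by case. Qed.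
Lemma ofcK : cancel ofc tc. Proof. by case. Qed.
Lemma tc_inj : injective tc. Proof. exact: can_inj tcK. Qed.

Lemma tc_add x y : tc (Cadd x y) = tc x + tc y. Proof. by case: x; case: y. Qed.
Lemma tc_mul x y : tc (Cmul x y) = tc x * tc y. Proof. by case: x; case: y. Qed.
Lemma tc_real r : tc (RtoC r) = r%:C. Proof. by []. Qed.
Lemma tc_conj x : tc (Cconj x) = (tc x)^*. Proof. by case: x. Qed.
Lemma tc_idm i j : tc (idm i j) = (i == j)%:R.
Proof.
rewrite /idm; case: (eqVneq i j) => [->|h]; first by rewrite Nat.eqb_refl.
by rewrite (proj2 (Nat.eqb_neq _ _)) //; apply/eqP.
Qed.

Lemma tc_csum n f : tc (csum n f) = \sum_(i < n) tc (f i).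
Proof. by elim: n => [|n IH] /=; rewrite ?big_ord0 // tc_add IH big_ord_recr. Qed.

Lemma rsumE n f : rsum n f = \sum_(i < n) f i.
Proof. by elim: n => [|n IH] /=; rewrite ?big_ord0 // IH big_ord_recr. Qed.

Lemma Re_tc z : complex.Re (tc z) = Cre z. Proof. by []. Qed.

Lemma Re_sum (I : Type) (r : seq I) P (f : I -> CC) :
  complex.Re (\sum_(i <- r | P i) f i) = \sum_(i <- r | P i) complex.Re (f i).
Proof. by apply: (big_morph _ _ (erefl _)) => x y; case: x; case: y. Qed.

Lemma Re_realM (x : R) (z : CC) : complex.Re (x%:C * z) = x * complex.Re z.
Proof. by case: z => a b /=; rewrite mul0r subr0. Qed.

Lemma Re_normsq (z : CC) : 0 <= complex.Re (z * z^*).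
Proof. by case: z => a b /=; rewrite mulrN opprK addr_ge0 // -expr2 sqr_ge0. Qed.

Definition mx n (A : Mat) : 'M[CC]_n := \matrix_(i < n, j < n) tc (A i j).
Definition unmx n (M : 'M[CC]_n) : Mat := fun i j =>
  match (insub i : option 'I_n), (insub j : option 'I_n) with
  | Some i', Some j' => ofc (M i' j') | _, _ => Defs.C0 end.

Lemma unmxK n M : mx n (unmx M) = M.
Proof. by apply/matrixP => i j; rewrite mxE /unmx !valK ofcK. Qed.

Lemma meqP n A B : meq n A B <-> mx n A = mx n B.
Proof.
split=> [h|h]; first by apply/matrixP => i j; rewrite !mxE h //; exact/ssrnat.ltP.
move=> i j /ssrnat.ltP hi /ssrnat.ltP hj; move/matrixP: h => /(_ (Ordinal hi) (Ordinal hj)).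
by rewrite !mxE => /tc_inj.
Qed.

Lemma mx_mmul n A B : mx n (mmul n A B) = mx n A *m mx n B.
Proof.
apply/matrixP => i j; rewrite !mxE /mmul tc_csum.
by apply: eq_bigr => k _; rewrite tc_mul !mxE.
Qed.

Lemma mx_adj n A : mx n (adj A) = (mx n A)^t*.
Proof. by apply/matrixP => i j; rewrite !mxE /adj tc_conj. Qed.

Lemma mx_idm n : mx n idm = 1%:M.
Proof. by apply/matrixP => i j; rewrite !mxE tc_idm. Qed.

Lemma mx_diag n l : mx n (diag l) = diag_mx (\row_(k < n) (l k)%:C).
Proof.
apply/matrixP => i j; rewrite !mxE /diag.
case: (eqVneq i j) => [->|h]; first by rewrite Nat.eqb_refl.
by rewrite (proj2 (Nat.eqb_neq _ _)) // => e; move/negP: h; apply; apply/eqP/val_inj.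
Qed.

Lemma unitaryP n U : unitary n U <-> (mx n U)^t* *m mx n U = 1%:M.
Proof. by rewrite /unitary meqP mx_mmul mx_adj mx_idm. Qed.

Lemma spectral_exists n A : Defs.hermitian n A ->
  exists U l, unitary n U /\ meq n A (mmul n U (mmul n (diag l) (adj U))).
Proof.
rewrite /Defs.hermitian meqP mx_adj => hA.
have hs : mx n A \is hermsymmx by apply/is_hermitianmxP; rewrite expr0 scale1r hA.
have hr := hermitian_spectral_diag_real hs.
have hu := spectral_unitarymx (mx n A).
move/orthomx_spectralP: (hermitian_normalmx hs); rewrite invmx_unitary // => eA.
set P := spectralmx (mx n A) in eA hu *; set sp := spectral_diag (mx n A) in eA hr *.
pose l k := if (insub k : option 'I_n) is Some k' then complex.Re (sp 0 k') else 0%R.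
exists (unmx (P^t*)), l; split.
  by apply/unitaryP; rewrite unmxK trmxCK; exact/unitarymxP.
apply/meqP; rewrite !mx_mmul mx_adj mx_diag unmxK trmxCK mulmxA {1}eA.
congr (_ *m _ *m _); congr diag_mx; apply/matrixP => i k; rewrite !mxE ord1 /l valK.
by rewrite RRe_real //; move/mxOverP: hr; apply.
Qed.

End ComplexBridge.

(** Indices of H_A (x) H_B are
    a * d + b; [effect d G] is G^dag G and [cond_state d rho G] is the
    unnormalised state Tr_B rho (1 (x) G^dag G), so that beta_j is its trace
    and rho_j^A is its normalisation. *)
Section ReducedStates.
Local Open Scope complex_scope.
Local Open Scope ring_scope.
Local Open Scope sesquilinear_scope.

Definition effect d (G : Mat) : Mat := mmul d (adj G) G.

Definition cond_state d rho G (a a' : nat) : CC :=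
  \sum_(b < d) \sum_(b' < d)
    tc (rho (a * d + b)%N (a' * d + b')%N) * tc (effect d G b' b).

Definition herm_entries N rho :=
  forall i k, (i < N)%N -> (k < N)%N -> (tc (rho i k))^* = tc (rho k i).

Lemma sum_pair_index (V : nmodType) n d (f : nat -> V) :
  \sum_(k < n * d) f k = \sum_(a < n) \sum_(b < d) f (a * d + b)%N.
Proof.
elim: n => [|n IH]; first by rewrite mul0n !big_ord0.
rewrite big_ord_recr /= -IH mulSnr big_split_ord /=.
by congr (_ + _); apply: eq_bigr => i _.
Qed.

Lemma pair_index_divmod a d b : (b < d)%N ->
  Nat.div (a * d + b) d = a /\ Nat.modulo (a * d + b) d = b.
Proof.
move=> /ssrnat.ltP h; split.
  by symmetry; apply: (Nat.div_unique _ _ _ b) => //; rewrite /muln /addn /=; lia.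
by symmetry; apply: (Nat.mod_unique _ _ a) => //; rewrite /muln /addn /=; lia.
Qed.

Lemma pair_index_lt n d a b : (a < n)%N -> (b < d)%N -> (a * d + b < n * d)%N.
Proof.
move=> ha hb; apply: (@leq_trans (a * d + d)); first by rewrite ltn_add2l.
by rewrite -mulSnr leq_mul2r ha orbT.
Qed.

(** Only the block a' of 1 (x) F_j^dag F_j contributes to column (a', b). *)
Lemma post_entry n d rho F j i a' b : (a' < n)%N -> (b < d)%N ->
  tc (post n d rho F j i (a' * d + b)%N) =
  \sum_(b' < d) tc (rho i (a' * d + b')%N) * tc (effect d (F j) b' b).
Proof.
move=> ha hb; rewrite /post /mmul tc_csum.
rewrite (@sum_pair_index _ n d
  (fun k => tc (Cmul (rho i k) (kron d idm (effect d (F j)) k (a' * d + b)%N)))).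
rewrite (bigD1 (Ordinal ha)) //= [X in _ + X]big1 ?addr0.
  apply: eq_bigr => b' _; rewrite tc_mul /kron tc_mul.
  case: (pair_index_divmod a' hb) => -> ->.
  case: (pair_index_divmod a' (ltn_ord b')) => -> ->.
  by rewrite tc_idm eqxx mul1r.
move=> a'' hne; apply: big1 => b' _; rewrite tc_mul /kron tc_mul.
case: (pair_index_divmod a' hb) => -> _; case: (pair_index_divmod a'' (ltn_ord b')) => -> _.
rewrite tc_idm; case: eqP => [e|]; last by rewrite mul0r mulr0.
by move/negP: hne; case; apply/eqP/val_inj.
Qed.

Lemma ptrace_post n d rho F j a a' : (a' < n)%N ->
  tc (ptraceB d (post n d rho F j) a a') = cond_state d rho (F j) a a'.
Proof. by move=> ha; rewrite /ptraceB tc_csum; apply: eq_bigr => b _; rewrite post_entry. Qed.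

Lemma beta_cond_state n d rho F j :
  beta n d rho F j = \sum_(a < n) complex.Re (cond_state d rho (F j) a a).
Proof.
rewrite /beta -Re_tc /trace tc_csum Re_sum.
rewrite (@sum_pair_index _ n d (fun i => complex.Re (tc (post n d rho F j i i)))).
apply: eq_bigr => a _; rewrite /cond_state Re_sum; apply: eq_bigr => b _.
by rewrite post_entry // Re_sum.
Qed.

Lemma rhoA_j_entry n d rho F j a a' : (a' < n)%N ->
  tc (rhoA_j n d rho F j a a') = (/ beta n d rho F j)%:C * cond_state d rho (F j) a a'.
Proof. by move=> ha; rewrite /rhoA_j /mscale tc_mul tc_real ptrace_post. Qed.

Lemma tc_effect d G b b' :
  tc (effect d G b b') = \sum_(c < d) (tc (G c b))^* * tc (G c b').
Proof. by rewrite /effect /mmul tc_csum; apply: eq_bigr => c _; rewrite tc_mul tc_conj. Qed.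

Lemma effect_herm d G b b' : (tc (effect d G b b'))^* = tc (effect d G b' b).
Proof.
rewrite !tc_effect rmorph_sum; apply: eq_bigr => c _.
by rewrite rmorphM /= conjCK mulrC.
Qed.

Lemma cond_state_herm n d rho G a a' : herm_entries (n * d) rho ->
  (a < n)%N -> (a' < n)%N -> (cond_state d rho G a' a)^* = cond_state d rho G a a'.
Proof.
move=> hr ha ha'; rewrite /cond_state rmorph_sum exchange_big /=; apply: eq_bigr => b _.
rewrite rmorph_sum; apply: eq_bigr => b' _.
by rewrite rmorphM /= effect_herm hr // pair_index_lt.
Qed.

End ReducedStates.

(** Positivity: each unnormalised conditional state is positive
    semidefinite, so beta_j >= 0, and completeness of {F_j} gives
    sum_j beta_j = Tr rho = 1. *)
Section Positivity.
Local Open Scope complex_scope.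
Local Open Scope ring_scope.
Local Open Scope sesquilinear_scope.

(** The vector (G_c^dag (x) 1) v on H_A (x) H_B, for a row c of G. *)
Definition lift_vec d (G : Mat) (v : nat -> CC) c k : CC :=
  (tc (G c (Nat.modulo k d)))^* * v (Nat.div k d).

Lemma cond_state_form n d rho G (v : nat -> CC) :
  \sum_(a < n) \sum_(a' < n) (v a)^* * cond_state d rho G a a' * v a' =
  \sum_(c < d) \sum_(i < n * d)
    (lift_vec d G v c i)^* * \sum_(k < n * d) tc (rho i k) * lift_vec d G v c k.
Proof.
transitivity (\sum_(a < n) \sum_(b < d) \sum_(a' < n) \sum_(b' < d)
   (v a)^* * tc (rho (a * d + b)%N (a' * d + b')%N) * v a' * tc (effect d G b' b)).
  apply: eq_bigr => a _.
  transitivity (\sum_(a' < n) \sum_(b < d) \sum_(b' < d)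
   (v a)^* * tc (rho (a * d + b)%N (a' * d + b')%N) * v a' * tc (effect d G b' b)).
    apply: eq_bigr => a' _; rewrite /cond_state mulr_sumr mulr_suml; apply: eq_bigr => b _.
    by rewrite mulr_sumr mulr_suml; apply: eq_bigr => b' _; ring.
  by rewrite exchange_big.
symmetry.
transitivity (\sum_(c < d) \sum_(a < n) \sum_(b < d) \sum_(a' < n) \sum_(b' < d)
   (tc (G c b) * (v a)^*) * (tc (rho (a * d + b)%N (a' * d + b')%N) * ((tc (G c b'))^* * v a'))).
  apply: eq_bigr => c _.
  rewrite (@sum_pair_index _ n d (fun i => (lift_vec d G v c i)^* *
                       \sum_(k < n * d) tc (rho i k) * lift_vec d G v c k)).
  apply: eq_bigr => a _; apply: eq_bigr => b _.
  rewrite (@sum_pair_index _ n d (fun k => tc (rho _ k) * lift_vec d G v c k)) mulr_sumr.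
  apply: eq_bigr => a' _; rewrite mulr_sumr; apply: eq_bigr => b' _.
  rewrite /lift_vec; case: (pair_index_divmod a (ltn_ord b)) => -> ->.
  case: (pair_index_divmod a' (ltn_ord b')) => -> ->.
  by rewrite rmorphM /= conjCK.
rewrite exchange_big; apply: eq_bigr => a _; rewrite exchange_big; apply: eq_bigr => b _.
rewrite exchange_big; apply: eq_bigr => a' _; rewrite exchange_big; apply: eq_bigr => b' _.
by rewrite tc_effect mulr_sumr; apply: eq_bigr => c _; ring.
Qed.

Lemma psd_form N rho (w : nat -> CC) : psd N rho ->
  (0 <= complex.Re (\sum_(i < N) (w i)^* * \sum_(k < N) tc (rho i k) * w k))%R.
Proof.
case=> _ /(_ (fun i => ofc (w i))); rewrite -Re_tc tc_csum => /RleP.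
congr (_ <= complex.Re _); apply: eq_bigr => i _.
rewrite tc_mul tc_conj ofcK tc_csum; congr (_ * _).
by apply: eq_bigr => k _; rewrite tc_mul ofcK.
Qed.

Lemma cond_state_psd n d rho G (v : nat -> CC) : psd (n * d) rho ->
  (0 <= complex.Re (\sum_(a < n) \sum_(a' < n) (v a)^* * cond_state d rho G a a' * v a'))%R.
Proof. by move=> h; rewrite cond_state_form Re_sum; apply: sumr_ge0 => c _; exact: psd_form. Qed.

Lemma psd_herm_entries N rho : psd N rho -> herm_entries N rho.
Proof.
case=> h _ i k hi hk; rewrite -tc_conj; congr tc.
by have := h k i (ssrnat.ltP hk) (ssrnat.ltP hi); rewrite /adj => <-; case: (rho i k).
Qed.

Lemma sum_delta (V : nmodType) n a (f : nat -> V) : (a < n)%N ->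
  \sum_(x < n) (if (x == a :> nat) then f x else 0) = f a.
Proof.
move=> ha; rewrite (bigD1 (Ordinal ha)) //= eqxx big1 ?addr0 // => x hne.
by rewrite ifF //; apply/negbTE; apply: contra hne => /eqP e; apply/eqP/val_inj.
Qed.

Lemma cond_state_diag_ge0 n d rho G a : psd (n * d) rho -> (a < n)%N ->
  (0 <= complex.Re (cond_state d rho G a a))%R.
Proof.
move=> h ha; have := cond_state_psd G (fun x => (x == a)%:R) h.
congr (_ <= complex.Re _).
rewrite -[RHS](@sum_delta _ n a (fun _ => cond_state d rho G a a)) //.
apply: eq_bigr => a0 _; case: eqP => [->|_]; last by apply: big1 => x _; rewrite rmorph0 !mul0r.
rewrite -(@sum_delta _ n a (fun x => cond_state d rho G a x)) //.
apply: eq_bigr => x _; rewrite rmorph1 mul1r.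
by case: eqP; rewrite ?mulr1 ?mulr0.
Qed.

Lemma beta_ge0 n d rho F j : psd (n * d) rho -> (0 <= beta n d rho F j)%R.
Proof.
move=> h; rewrite beta_cond_state; apply: sumr_ge0 => a _.
exact: (cond_state_diag_ge0 _ h (ltn_ord a)).
Qed.

Lemma sum_beta n d rho m F : density (n * d) rho -> meas_ops d m F ->
  rsum m (beta n d rho F) = 1%R.
Proof.
move=> [hp ht] hm; rewrite rsumE.
under eq_bigr do rewrite beta_cond_state.
have complete b b' : (b < d)%N -> (b' < d)%N ->
    \sum_(j < m) tc (effect d (F j) b' b) = (b' == b)%:R.
  move=> hb hb'; rewrite -tc_idm -(hm b' b (ssrnat.ltP hb') (ssrnat.ltP hb)).
  by rewrite /msum tc_csum.
have -> : 1%R = complex.Re (\sum_(i < n * d) tc (rho i i)).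
  by rewrite -(@tc_csum (n * d) (fun i => rho i i)); change (csum _ _) with (trace (n * d) rho); rewrite ht.
rewrite exchange_big (@sum_pair_index _ n d (fun i => tc (rho i i))) Re_sum /=.
apply: eq_bigr => a _; rewrite -Re_sum; congr complex.Re.
rewrite /cond_state exchange_big /=; apply: eq_bigr => b _.
rewrite exchange_big /= -(@sum_delta _ d b (fun _ => tc (rho (a * d + b)%N (a * d + b)%N))) //.
apply: eq_bigr => b' _; rewrite -mulr_sumr complete //.
by case: eqP => [->|]; rewrite ?mulr1 ?mulr0.
Qed.

End Positivity.

Section DoublyStochastic.
Local Open Scope ring_scope.

Variables (n : nat) (P : 'I_n -> 'I_n -> R) (l q : 'I_n -> R) (o : R).
Hypotheses (ho : 0 < o) (P_ge0 : forall i k, 0 <= P i k)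
  (P_row : forall i, \sum_k P i k = 1) (P_col : forall k, \sum_i P i k = 1)
  (l_ge0 : forall k, 0 <= l k) (l_sum : \sum_k l k = 1)
  (q_ge0 : forall i, 0 <= q i) (q_sum : \sum_i q i = 1)
  (q_pos : forall i, 0 < \sum_k P i k * l k -> 0 < q i).

Let alpha i := \sum_k P i k * l k.

Let alpha_ge0 i : 0 <= alpha i.
Proof. by apply: sumr_ge0 => k _; rewrite mulr_ge0. Qed.

Let alpha_term_le i k : P i k * l k <= alpha i.
Proof. by rewrite /alpha (bigD1 k) //= lerDl; apply: sumr_ge0 => k' _; rewrite mulr_ge0. Qed.

Let alpha_sum : \sum_i alpha i = 1.
Proof.
rewrite /alpha exchange_big /= -l_sum; apply: eq_bigr => k _.
by rewrite -mulr_suml P_col mul1r.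
Qed.

Lemma averaging_xlnx_le : \sum_i alpha i * ln (alpha i) <= \sum_k l k * ln (l k).
Proof.
have termwise : \sum_i \sum_k (P i k * l k - P i k * alpha i)
    <= \sum_i \sum_k P i k * l k * (ln (l k) - ln (alpha i)).
  apply: ler_sum => i _; apply: ler_sum => k _; apply/RleP.
  by apply: weighted_xln_ratio_le; apply/RleP;
    [exact: P_ge0 | exact: l_ge0 | exact: alpha_ge0 | exact: alpha_term_le].
have lhs0 : \sum_i \sum_k (P i k * l k - P i k * alpha i) = 0.
  by apply: big1 => i _; rewrite sumrB -mulr_suml P_row mul1r subrr.
have rhsE : \sum_i \sum_k P i k * l k * (ln (l k) - ln (alpha i)) =
    \sum_k l k * ln (l k) - \sum_i alpha i * ln (alpha i).
  under eq_bigr do (under eq_bigr do rewrite mulrBr; rewrite sumrB).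
  rewrite sumrB exchange_big /=; congr (_ - _).
    apply: eq_bigr => k _; rewrite -[RHS]mul1r -(P_col k) mulr_suml.
    by apply: eq_bigr => i _; ring.
  by apply: eq_bigr => i _; rewrite /alpha mulr_suml; apply: eq_bigr => k _; ring.
by move: termwise; rewrite lhs0 rhsE subr_ge0.
Qed.

Lemma gibbs_le : \sum_i alpha i * ln (q i) <= \sum_i alpha i * ln (alpha i).
Proof.
have termwise : \sum_i alpha i * (ln (q i) - ln (alpha i)) <= \sum_i (q i - alpha i).
  apply: ler_sum => i _; apply/RleP; apply: xln_ratio_le; try apply/RleP.
  - exact: alpha_ge0.
  - exact: q_ge0.
  - by move=> /RltP h; apply/RltP/q_pos.
move: termwise; rewrite sumrB q_sum alpha_sum subrr.
by under eq_bigr do rewrite mulrBr; rewrite sumrB subr_le0.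
Qed.

Lemma doubly_stochastic_rate_le :
  \sum_i alpha i * log2 (q i * o) <= log2 o - \sum_k eta (l k).
Proof.
have rateE : \sum_i alpha i * log2 (q i * o) = (\sum_i alpha i * ln (q i) + ln o) / ln 2.
  rewrite (eq_bigr (fun i => (alpha i * ln (q i) + alpha i * ln o) / ln 2)); last first.
    move=> i _; apply: xlog2_mul; [exact/RleP/alpha_ge0 | exact/RltP |].
    by move=> /RltP h; apply/RltP/q_pos.
  by rewrite -mulr_suml big_split /= -mulr_suml alpha_sum mul1r.
have entE : \sum_k eta (l k) = - (\sum_k l k * ln (l k)) / ln 2.
  rewrite (eq_bigr (fun k => - (l k * ln (l k)) / ln 2)); last first.
    by move=> k _; rewrite eta_ln //; apply/RleP.
  by rewrite -mulr_suml -sumrN.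
have := le_trans gibbs_le averaging_xlnx_le; rewrite rateE entE /log2.
set X := \sum_i alpha i * ln (q i); set Z := \sum_k l k * ln (l k).
move=> /RleP hXZ; apply/RleP.
change (Rle ((X + ln o) * / ln 2) (ln o * / ln 2 - (- Z * / ln 2))).
have := Rmult_le_compat_r (/ ln 2) (X + ln o) (ln o + Z)
  (Rlt_le _ _ (Rinv_0_lt_compat _ ln2_pos)) ltac:(lra).
lra.
Qed.

End DoublyStochastic.

Definition basis_mx n (e : nat -> nat -> Defs.C) : 'M[CC]_n :=
  \matrix_(k < n, i < n) tc (e i k).

Section Bases.
Local Open Scope complex_scope.
Local Open Scope ring_scope.
Local Open Scope sesquilinear_scope.

Lemma onbP n e : onb n e <-> (basis_mx n e)^t* *m basis_mx n e = 1%:M.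
Proof.
have gram i i' : ((basis_mx n e)^t* *m basis_mx n e) i i' =
    tc (csum n (fun k => Cmul (Cconj (e i k)) (e i' k))).
  by rewrite !mxE tc_csum; apply: eq_bigr => k _; rewrite tc_mul tc_conj !mxE.
split=> [h|h].
  apply/matrixP => i i'; rewrite gram h; try exact/ssrnat.ltP/ltn_ord.
  by rewrite mxE -val_eqE -tc_idm.
move=> i i' /ssrnat.ltP hi /ssrnat.ltP hi'; apply: tc_inj.
move/matrixP: h => /(_ (Ordinal hi) (Ordinal hi')); rewrite gram mxE => ->.
by rewrite -[RHS]/(tc (idm i i')) tc_idm.
Qed.

Lemma trace_proj_mx n A (e : nat -> nat -> Defs.C) (i : 'I_n) :
  tc (trace n (mmul n A (proj e i))) =
  ((basis_mx n e)^t* *m mx n A *m basis_mx n e) i i.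
Proof.
rewrite /trace tc_csum !mxE; under [RHS]eq_bigr do rewrite !mxE mulr_suml.
rewrite exchange_big /=; apply: eq_bigr => k _; rewrite /mmul tc_csum; apply: eq_bigr => l _.
by rewrite /proj !tc_mul tc_conj !mxE; ring.
Qed.

End Bases.

Section Outcome.
Local Open Scope complex_scope.
Local Open Scope ring_scope.
Local Open Scope sesquilinear_scope.

Variables (n d : nat) (rho : Mat) (F : nat -> Mat) (j : nat).
Hypothesis rho_density : density (n * d) rho.

Let bj := beta n d rho F j.
Let sigma : 'M[CC]_n := \matrix_(a < n, a' < n) cond_state d rho (F j) a a'.

Lemma mx_rhoA_j : mx n (rhoA_j n d rho F j) = (/ bj)%:C *: sigma.
Proof. by apply/matrixP => a a'; rewrite !mxE rhoA_j_entry. Qed.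

Lemma rhoA_j_hermitian : Defs.hermitian n (rhoA_j n d rho F j).
Proof.
rewrite /Defs.hermitian meqP mx_adj mx_rhoA_j; apply/matrixP => a a'; rewrite !mxE.
rewrite rmorphM /= conj_Creal ?complex_real // (@cond_state_herm n) //.
exact: psd_herm_entries (proj1 rho_density).
Qed.

Lemma entropy_spectral : exists U l, unitary n U /\
   meq n (rhoA_j n d rho F j) (mmul n U (mmul n (diag l) (adj U))) /\
   vN_entropy n (rhoA_j n d rho F j) = rsum n (fun k => eta (l k)).
Proof.
have [U [l [hU hm]]] := spectral_exists rhoA_j_hermitian.
have ex : exists s, is_vn_entropy n (rhoA_j n d rho F j) s.
  by exists (rsum n (fun k => eta (l k))), U, l.
have [U' [l' [h1 [h2 h3]]]] := epsilon_spec (inhabits 0%R) _ ex.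
by exists U', l'.
Qed.

Hypothesis beta_pos : 0 < bj.

Lemma rhoA_j_quad_ge0 (W : 'M[CC]_n) (i : 'I_n) :
  0 <= complex.Re ((W^t* *m mx n (rhoA_j n d rho F j) *m W) i i).
Proof.
pose v x := if (insub x : option 'I_n) is Some a then W a i else 0.
have h := cond_state_psd (F j) v (proj1 rho_density).
have -> : (W^t* *m mx n (rhoA_j n d rho F j) *m W) i i =
   (/ bj)%:C * \sum_(a < n) \sum_(a' < n) (v a)^* * cond_state d rho (F j) a a' * v a'.
  rewrite mx_rhoA_j !mxE mulr_sumr; under eq_bigr do rewrite !mxE.
  under eq_bigr do rewrite mulr_suml.
  rewrite exchange_big /=; apply: eq_bigr => a _.
  by rewrite mulr_sumr; apply: eq_bigr => a' _; rewrite !mxE /v !valK; ring.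
by rewrite Re_realM; apply: mulr_ge0 => //; rewrite invr_ge0 ltW.
Qed.

Lemma rhoA_j_trace : complex.Re (\tr (mx n (rhoA_j n d rho F j))) = 1.
Proof.
rewrite mx_rhoA_j /mxtrace; under eq_bigr do rewrite !mxE.
rewrite -mulr_sumr Re_realM Re_sum -beta_cond_state -/bj.
by rewrite mulVf // lt0r_neq0.
Qed.

(** Probability of outcome i when measuring rho_j^A in the basis e;
    by definition [alpha n d rho F e i j = outcome_prob (e j) i]. *)
Definition outcome_prob (e : nat -> nat -> Defs.C) i : R :=
  Cre (trace n (mmul n (rhoA_j n d rho F j) (proj e i))).

Lemma outcome_prob_mx e (i : 'I_n) : outcome_prob e i =
  complex.Re (((basis_mx n e)^t* *m mx n (rhoA_j n d rho F j) *m basis_mx n e) i i).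
Proof. by rewrite /outcome_prob -Re_tc trace_proj_mx. Qed.

Variables (U : Mat) (l : nat -> R).
Hypotheses (U_unitary : unitary n U)
  (rhoA_j_eigen : meq n (rhoA_j n d rho F j) (mmul n U (mmul n (diag l) (adj U)))).

Let V := mx n U.
Let lr := \row_(k < n) (l k)%:C : 'rV[CC]_n.

Let V_unitary : V^t* *m V = 1%:M. Proof. exact/unitaryP. Qed.
Let V_unitary_r : V *m V^t* = 1%:M. Proof. exact/mulmx1C/V_unitary. Qed.

Lemma mx_rhoA_j_eigen : mx n (rhoA_j n d rho F j) = V *m diag_mx lr *m V^t*.
Proof. by move/meqP: rhoA_j_eigen; rewrite !mx_mmul mx_adj mx_diag mulmxA. Qed.

Lemma eigval_quad (k : 'I_n) :
  complex.Re ((V^t* *m mx n (rhoA_j n d rho F j) *m V) k k) = l k.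
Proof.
rewrite mx_rhoA_j_eigen !mulmxA V_unitary mul1mx -!mulmxA V_unitary mulmx1.
by rewrite !mxE eqxx mulr1n.
Qed.

Lemma eigval_ge0 (k : 'I_n) : 0 <= l k.
Proof. by rewrite -eigval_quad; exact: rhoA_j_quad_ge0. Qed.

Lemma eigval_sum : \sum_(k < n) l k = 1.
Proof.
rewrite -rhoA_j_trace.
have -> : \tr (mx n (rhoA_j n d rho F j)) = \tr (V^t* *m mx n (rhoA_j n d rho F j) *m V).
  by rewrite mxtrace_mulC mulmxA V_unitary_r mul1mx.
by rewrite /mxtrace Re_sum; apply: eq_bigr => k _; rewrite eigval_quad.
Qed.

Lemma diag_quad (Y : 'M[CC]_n) (i : 'I_n) :
  (Y *m diag_mx lr *m Y^t*) i i = \sum_(k < n) (l k)%:C * (Y i k * (Y i k)^*).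
Proof.
rewrite !mxE; apply: eq_bigr => k _; rewrite !mxE.
rewrite (bigD1 k) //= big1 ?addr0 => [|k' hk]; last by rewrite !mxE (negbTE hk) mulr0n mulr0.
by rewrite !mxE eqxx mulr1n; ring.
Qed.

(** Converse bound for one outcome: no basis and betting vector beats
    log2 o - S(rho_j^A).  The transition matrix |<e_i, u_k>|^2 between the
    chosen basis and the eigenbasis is doubly stochastic. *)
Lemma outcome_rate_le o (ho : 0 < o) (e : nat -> nat -> Defs.C) (q : nat -> R) :
  onb n e -> (forall i : 'I_n, 0 <= q i) -> \sum_(i < n) q i = 1 ->
  (forall i : 'I_n, 0 < outcome_prob e i -> 0 < q i) ->
  \sum_(i < n) outcome_prob e i * log2 (q i * o) <= log2 o - \sum_(k < n) eta (l k).
Proof.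
move=> /onbP E_unitary q_ge0 q_sum q_pos.
set E := basis_mx n e in E_unitary.
have E_unitary_r : E *m E^t* = 1%:M by exact: mulmx1C.
set Y := E^t* *m V.
have Y_rowsE : Y *m Y^t* = 1%:M.
  by rewrite /Y trmx_mul map_mxM trmxCK mulmxA -(mulmxA _ V) V_unitary_r mulmx1.
have Y_colsE : Y^t* *m Y = 1%:M.
  by rewrite /Y trmx_mul map_mxM trmxCK mulmxA -(mulmxA _ E) E_unitary_r mulmx1.
pose P (i k : 'I_n) := complex.Re (Y i k * (Y i k)^*).
have probE (i : 'I_n) : outcome_prob e i = \sum_(k < n) P i k * l k.
  rewrite outcome_prob_mx -/E mx_rhoA_j_eigen.
  rewrite (_ : E^t* *m (V *m diag_mx lr *m V^t*) *m E = Y *m diag_mx lr *m Y^t*); last first.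
    by rewrite /Y trmx_mul map_mxM trmxCK !mulmxA.
  by rewrite diag_quad Re_sum; apply: eq_bigr => k _; rewrite Re_realM mulrC.
under eq_bigr do rewrite probE.
apply: (@doubly_stochastic_rate_le n P (fun k => l k) (fun i => q i) o ho) => //.
- by move=> i k; exact: Re_normsq.
- move=> i; have : (Y *m Y^t*) i i = 1 by rewrite Y_rowsE mxE eqxx.
  rewrite mxE /P -Re_sum => rowE.
  by rewrite (eq_bigr (fun k => Y i k * (Y^t*) k i)) ?rowE // => k _; rewrite !mxE.
- move=> k; have : (Y^t* *m Y) k k = 1 by rewrite Y_colsE mxE eqxx.
  rewrite mxE /P -Re_sum => colE.
  by rewrite (eq_bigr (fun i => (Y^t*) k i * Y i k)) ?colE // => i _; rewrite !mxE mulrC.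
- exact: eigval_ge0.
- exact: eigval_sum.
- by move=> i h; apply: q_pos; rewrite probE.
Qed.

Lemma eigenbasis_outcome_prob :
  exists e : nat -> nat -> Defs.C, onb n e /\ (forall i : 'I_n, outcome_prob e i = l i).
Proof.
exists (fun i k => unmx V k i).
have E_eq : basis_mx n (fun i k => unmx V k i) = V.
  by apply/matrixP => k i; rewrite !mxE /unmx !valK ofcK /V !mxE.
split; first by apply/onbP; rewrite E_eq V_unitary.
by move=> i; rewrite outcome_prob_mx E_eq eigval_quad.
Qed.

End Outcome.

Definition cond_entropy n d rho m F : R :=
  rsum m (fun j => Rmult (beta n d rho F j) (vN_entropy n (rhoA_j n d rho F j))).

Section Assembly.
Local Open Scope ring_scope.

Lemma density_dim_pos n d rho : density (n * d)%nat rho -> (0 < n)%coq_nat.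
Proof.
case=> _; case: n => [|n]; last by move=> _; apply: Nat.lt_0_succ.
by rewrite mul0n /trace /= /C0 /C1 => h; injection h; lra.
Qed.

Lemma beta_zero_or_pos n d rho F j : psd (n * d) rho ->
  beta n d rho F j = 0 \/ 0 < beta n d rho F j.
Proof. by move=> h; have := beta_ge0 F j h; rewrite le_eqVlt => /orP [/eqP <-|]; [left|right]. Qed.

(** Since sum_j beta_j = 1, the candidate optimal rate splits over outcomes. *)
Lemma log2_sub_cond_entropy n d rho m F o : density (n * d) rho -> meas_ops d m F ->
  log2 o - cond_entropy n d rho m F =
  \sum_(j < m) beta n d rho F j * (log2 o - vN_entropy n (rhoA_j n d rho F j)).
Proof.
move=> hr hm; rewrite /cond_entropy rsumE.
rewrite -[log2 o in LHS]mulr1 -(sum_beta hr hm) rsumE mulr_sumr -sumrB.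
by apply: eq_bigr => j _; rewrite RmultE; ring.
Qed.

Lemma rate_le_cond_entropy n d rho o m F e q : density (n * d) rho -> 0 < o ->
  meas_ops d m F -> (forall j, (j < m)%coq_nat -> onb n (e j)) -> betting n m q ->
  finite_rate n d rho m F e q ->
  doubling_rate n d rho o m F e q <= log2 o - cond_entropy n d rho m F.
Proof.
move=> hr ho hm he [q_ge0 q_sum] hf.
rewrite log2_sub_cond_entropy // /doubling_rate rsumE; apply: ler_sum => j _.
have hj : (j < m)%coq_nat by apply/ssrnat.ltP.
case: (beta_zero_or_pos F j (proj1 hr)) => [->|bpos].
  by rewrite !RmultE !mul0r.
rewrite RmultE; apply: ler_wpM2l; first exact: ltW.
have [U [l [hU [heig ->]]]] := entropy_spectral F j hr.
rewrite !rsumE.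
apply: (@outcome_rate_le n d rho F j hr bpos U l hU heig o ho (e j) (fun i => q i j) (he j hj)).
- by move=> i; apply/RleP; apply: q_ge0 => //; apply/ssrnat.ltP.
- by rewrite -(@rsumE n (fun i => q i j)) (q_sum j hj).
- move=> i hai; apply/RltP; apply: hf => //; first by apply/ssrnat.ltP.
  by apply/RltP; rewrite mulr_gt0.
Qed.

Definition optimal_bet n d rho o F j (e : nat -> nat -> Defs.C) (q : nat -> R) : Prop :=
  [/\ onb n e, forall i, (i < n)%coq_nat -> 0 <= q i, rsum n q = 1,
      forall i, (i < n)%coq_nat -> 0 < beta n d rho F j * outcome_prob n d rho F j e i ->
        0 < q i &
      Rmult (beta n d rho F j)
        (rsum n (fun i => Rmult (outcome_prob n d rho F j e i) (log2 (q i * o)))) =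
      beta n d rho F j * (log2 o - vN_entropy n (rhoA_j n d rho F j))].

(** Bet the eigenvalues in the eigenbasis; an outcome of probability zero
    allows any uniform bet. *)
Lemma optimal_bet_exists n d rho o F j : density (n * d) rho -> 0 < o ->
  exists eq : (nat -> nat -> Defs.C) * (nat -> R), optimal_bet n d rho o F j eq.1 eq.2.
Proof.
move=> hr ho.
case: (beta_zero_or_pos F j (proj1 hr)) => [b0|bpos].
  have n_pos := density_dim_pos hr.
  exists (idm, fun _ => / INR n); split => /=.
  - apply/onbP; have -> : basis_mx n idm = 1%:M.
      by apply/matrixP => k i; rewrite !mxE tc_idm eq_sym.
    by rewrite trmx1 map_mx1 mulmx1.
  - by move=> i _; apply/RleP/Rlt_le/Rinv_0_lt_compat/lt_0_INR.
  - by rewrite rsum_const; apply: Rinv_r; apply: not_0_INR; lia.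
  - by move=> i _; rewrite b0 mul0r ltxx.
  - by rewrite b0 !RmultE !mul0r.
have [U [l [hU [heig hS]]]] := entropy_spectral F j hr.
have [e [he probE]] := eigenbasis_outcome_prob hU heig.
exists (e, l); split => /=.
- exact: he.
- by move=> i /ssrnat.ltP hi; exact: (eigval_ge0 hr bpos hU heig (Ordinal hi)).
- by rewrite rsumE; exact: (eigval_sum bpos hU heig).
- by move=> i /ssrnat.ltP hi; rewrite (probE (Ordinal hi)) pmulr_rgt0.
- rewrite hS RmultE; congr (_ * _); rewrite !rsumE.
  transitivity (\sum_(i < n) (l i * log2 o - eta (l i))).
    apply: eq_bigr => i _; rewrite probE; apply: xlog2_self; last exact/RltP.
    exact/RleP/(eigval_ge0 hr bpos hU heig).
  by rewrite sumrB -mulr_suml (eigval_sum bpos hU heig) mul1r.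
Qed.

Lemma cond_entropy_rate n d rho o m F : density (n * d) rho -> 0 < o ->
  meas_ops d m F -> RateSet n d rho o (log2 o - cond_entropy n d rho m F).
Proof.
move=> hr ho hm.
pose choice j := constructive_indefinite_description _ (@optimal_bet_exists n d rho o F j hr ho).
have opt j : optimal_bet n d rho o F j (sval (choice j)).1 (sval (choice j)).2.
  exact: proj2_sig (choice j).
exists m, F, (fun j => (sval (choice j)).1), (fun i j => (sval (choice j)).2 i).
split; first exact: hm.
split; first by move=> j _; case: (opt j).
split; first split.
- by move=> i j hi _; case: (opt j) => _ h _ _ _; apply/RleP; exact: h.
- by move=> j _; case: (opt j) => _ _ h _ _; rewrite h.
split.
- move=> i j hi _ /RltP h; case: (opt j) => _ _ _ h' _; apply/RltP; exact: h'.
- rewrite RminusE log2_sub_cond_entropy // /doubling_rate rsumE; apply: eq_bigr => j _.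
  by case: (opt j) => _ _ _ _ ->.
Qed.

End Assembly.

Section MainTheorem.
Local Open Scope R_scope.

Lemma is_lub_shift (A B : R -> Prop) (c : R) :
  (forall u, is_upper_bound A u <-> is_upper_bound B (u - c)) ->
  forall W, is_lub A W <-> is_lub B (W - c).
Proof.
move=> ub W; split=> -[hW hmin]; split; try exact/ub.
- move=> b hb; have := hmin (b + c); rewrite ub (_ : b + c - c = b); last lra.
  by move=> /(_ hb); lra.
- by move=> b /ub /hmin; lra.
Qed.

(** By achievability and the converse, rates and gains have the same upper
    bounds up to the shift W_A^** = log2 o - S(rho^A). *)
Lemma rate_gain_upper_bounds n d rho o : density (n * d)%nat rho -> 0 < o ->
  forall u, is_upper_bound (RateSet n d rho o) u <->
            is_upper_bound (GainSet n d rho) (u - W_A_star n d rho o).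
Proof.
move=> hr /RltP ho u; rewrite /W_A_star; split=> hu x.
- case=> m [F [hm ->]].
  by have := hu _ (cond_entropy_rate hr ho hm); rewrite /cond_entropy; lra.
- case=> m [F [e [q [hm [he [hb [hf ->]]]]]]].
  have /RleP := rate_le_cond_entropy hr ho hm he hb hf.
  have := hu _ (ex_intro _ m (ex_intro _ F (conj hm erefl))).
  rewrite -RminusE /cond_entropy; lra.
Qed.

End MainTheorem.

Theorem mainTheorem3 (n d : nat) (rho : Mat) (o : R) :
  density (n * d)%nat rho -> 0 < o ->
  forall W : R,
    is_lub (RateSet n d rho o) W <->
    is_lub (GainSet n d rho) (W - W_A_star n d rho o).
Proof. by move=> hr ho; apply/is_lub_shift/rate_gain_upper_bounds. Qed.
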